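(* Let $n\ge2$ and $\pi\in\mathfrak S_{n-1}(2413,4213)$, and write $\mathrm{AVA}(\pi)=\{n=k_1>k_2>\dots>k_m=1\}$. Then for each $1\le j\le m$, $$\mathrm{AVA}(T_{k_j}(\pi))=\{n+1,\,k_j+1\}\cup\{k_j,k_{j+1},\dots,k_m\}.$$
   Context: $\mathfrak S_n(2413,4213)$ is the set of permutations of $[n]$ with no subsequence order isomorphic to $2413$ or $4213$. For $k\in[n]$ and $\pi=\pi_1\cdots\pi_{n-1}\in\mathfrak S_{n-1}$, define $T_k(\pi)=\pi'_1\pi'_2\cdots\pi'_{n-1}k\in\mathfrak S_n$, where $\pi'_i=\pi_i+1$ if $\pi_i\ge k$ and $\pi'_i=\pi_i$ otherwise. For $\pi\in\mathfrak S_{n-1}(2413,4213)$, $\mathrm{AVA}(\pi)=\{k\in[n]:T_k(\pi)\in\mathfrak S_n(2413,4213)\}$; it always contains $n$ and $1$. *)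

From mathcomp Require Import all_boot.
Set Implicit Arguments. Unset Strict Implicit. Unset Printing Implicit Defensive.

Definition is_perm (n : nat) (s : seq nat) : bool := perm_eq s (iota 1 n).

Definition order_iso (a b : seq nat) : Prop :=
  size a = size b /\
  forall i j, i < size a -> j < size a ->
    (nth 0 a i < nth 0 a j) = (nth 0 b i < nth 0 b j).

Definition contains (s p : seq nat) : Prop :=
  exists m : bitseq, size m = size s /\ order_iso (mask m s) p.

Definition avoids_2413_4213 (s : seq nat) : Prop :=
  ~ contains s [:: 2; 4; 1; 3] /\ ~ contains s [:: 4; 2; 1; 3].

Definition T (k : nat) (pi : seq nat) : seq nat :=
  rcons [seq (if k <= x then x.+1 else x) | x <- pi] k.

(* k \in AVA(pi), for pi in S_{n-1} with n - 1 = size pi: k in [n] and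
   T_k(pi) avoids 2413 and 4213. *)
Definition AVA (pi : seq nat) (k : nat) : Prop :=
  1 <= k <= (size pi).+1 /\ avoids_2413_4213 (T k pi).

From mathcomp Require Import all_boot zify.
Set Implicit Arguments. Unset Strict Implicit.

(* The last entry k of T_k(s) can only be the final "3" of an occurrence of 2413
   or 4213, completing a subsequence a b c of s with c < min(a,b) < k <= max(a,b);
   call k straddled in s then.  So k is in AVA(s) iff s avoids both patterns and
   k is not straddled in s.  For s = T_k(pi): a value x <= k is straddled in s iff
   it is straddled in pi; k+1 is straddled in s only if k is straddled in pi; each
   k+2 <= x <= n is straddled by the entries k+1, x of s followed by k; and n+1
   exceeds every entry of s. *)

Definition shift (k v : nat) : nat := if k <= v then v.+1 else v.

Lemma T_shift k s : T k s = rcons (map (shift k) s) k.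
Proof. by []. Qed.

Lemma ltn_shift k : {mono shift k : u v / u < v}.
Proof. by move=> u v; rewrite /shift; case: ifP; case: ifP; lia. Qed.

Lemma subseq_rcons_inv (A : eqType) (t s : seq A) y :
  subseq t (rcons s y) -> subseq t s \/ exists2 u, subseq u s & t = rcons u y.
Proof.
rewrite -subseq_rev rev_rcons; case/lastP: t => [|u z]; first by left; rewrite sub0seq.
rewrite rev_rcons /=; case: eqP => [->|_] sub_ts.
  by right; exists u; rewrite // -subseq_rev.
by left; rewrite -subseq_rev rev_rcons.
Qed.

Lemma subseq_map_inv (T1 T2 : eqType) (f : T1 -> T2) t s :
  subseq t (map f s) -> exists2 u, subseq u s & t = map f u.
Proof. by case/subseqP=> m _ ->; exists (mask m s); rewrite ?mask_subseq ?map_mask. Qed.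

Lemma subseq_T_inv k s t : subseq t (T k s) ->
  (exists2 u, subseq u s & t = map (shift k) u) \/
  (exists2 u, subseq u s & t = rcons (map (shift k) u) k).
Proof.
case/subseq_rcons_inv=> [|[t' /subseq_map_inv[u sub_us ->] ->]]; last by right; exists u.
by case/subseq_map_inv=> u; left; exists u.
Qed.

Lemma subseq_pair (A : eqType) (x y : A) s : x \in s -> y \in s -> x != y ->
  subseq [:: x; y] s || subseq [:: y; x] s.
Proof.
case/splitPr=> p1 p2; rewrite mem_cat inE => /or3P[y_p1|/eqP->|y_p2].
- by rewrite orbC -cat1s (cat_subseq (_ : subseq [:: y] p1)) ?sub1seq ?mem_head.
- by rewrite eqxx.
- by rewrite (cat_subseq (sub0seq p1)) //= eqxx sub1seq.
Qed.

Definition pattern_2413_4213 (a b c d : nat) : bool :=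
  (c < minn a b < d) && (d < maxn a b).

Lemma pattern_2413_4213E a b c d : pattern_2413_4213 a b c d =
  ((c < a < d) && (d < b)) || ((c < b < d) && (d < a)).
Proof. by apply/idP/idP; rewrite /pattern_2413_4213; lia. Qed.

Lemma order_iso_2413 a b c d :
  order_iso [:: a; b; c; d] [:: 2; 4; 1; 3] <-> (c < a < d) && (d < b).
Proof.
split=> [[_ iso] | pat]; first by rewrite (iso 2 0) ?(iso 0 3) ?(iso 3 1).
split=> // - [|[|[|[|i]]]] [|[|[|[|j]]]] //= _ _; apply/idP/idP; lia.
Qed.

Lemma order_iso_4213 a b c d :
  order_iso [:: a; b; c; d] [:: 4; 2; 1; 3] <-> (c < b < d) && (d < a).
Proof.
split=> [[_ iso] | pat]; first by rewrite (iso 2 1) ?(iso 1 3) ?(iso 3 0).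
split=> // - [|[|[|[|i]]]] [|[|[|[|j]]]] //= _ _; apply/idP/idP; lia.
Qed.

Lemma containsP s p : contains s p <-> exists2 t, subseq t s & order_iso t p.
Proof.
split=> [[m [_ iso]] | [t /subseqP[m size_m ->] iso]]; last by exists m.
by exists (mask m s); rewrite ?mask_subseq.
Qed.

Lemma avoids_2413_4213P s : avoids_2413_4213 s <->
  forall a b c d, subseq [:: a; b; c; d] s -> ~~ pattern_2413_4213 a b c d.
Proof.
split=> [[no2413 no4213] a b c d sub_s | no_pat].
  rewrite pattern_2413_4213E; apply/negP => /orP[/order_iso_2413 | /order_iso_4213] iso;
    [apply: no2413 | apply: no4213]; apply/containsP; by exists [:: a; b; c; d].
split=> /containsP[[|a [|b [|c [|d [|? ?]]]]] sub_s iso //]; try by case: iso.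
  by move/order_iso_2413: iso (no_pat a b c d sub_s); rewrite pattern_2413_4213E => ->.
by move/order_iso_4213: iso (no_pat a b c d sub_s); rewrite pattern_2413_4213E => ->; rewrite orbT.
Qed.

Lemma pattern_shift k a b c d : pattern_2413_4213 (shift k a) (shift k b) (shift k c) (shift k d) =
  pattern_2413_4213 a b c d.
Proof. by rewrite !pattern_2413_4213E !ltn_shift. Qed.

Lemma pattern_shift_last k a b c : pattern_2413_4213 (shift k a) (shift k b) (shift k c) k =
  (c < minn a b < k) && (k <= maxn a b).
Proof. by apply/idP/idP; rewrite /pattern_2413_4213 /shift; do 3!case: ifP; lia. Qed.

Definition straddled (s : seq nat) (y : nat) : Prop :=
  exists a b c, subseq [:: a; b; c] s /\ (c < minn a b < y) && (y <= maxn a b).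

Lemma avoids_T k s :
  avoids_2413_4213 (T k s) <-> avoids_2413_4213 s /\ ~ straddled s k.
Proof.
rewrite !avoids_2413_4213P; split=> [no_pat | [no_pat not_str] a b c d].
  split=> [a b c d sub_s | [a [b [c [sub_s str]]]]].
    rewrite -(pattern_shift k); apply: no_pat.
    exact: subseq_trans (map_subseq (shift k) sub_s) (subseq_rcons _ k).
  have sub_T : subseq [:: shift k a; shift k b; shift k c; k] (T k s).
    by rewrite T_shift -cats1 (cat_subseq (map_subseq (shift k) sub_s)).
  by move: (no_pat _ _ _ _ sub_T); rewrite pattern_shift_last str.
case/subseq_T_inv=> -[u sub_us].
  case: u sub_us => [|a' [|b' [|c' [|d' [|? ?]]]]] //= sub_us [-> -> -> ->].
  by rewrite pattern_shift; apply: no_pat.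
case: u sub_us => [|a' [|b' [|c' [|? [|? ?]]]]] //= sub_us [-> -> -> ->].
rewrite pattern_shift_last; apply/negP => str; apply: not_str; by exists a', b', c'.
Qed.

Lemma AVAE s y :
  AVA s y <-> [/\ 0 < y <= (size s).+1, avoids_2413_4213 s & ~ straddled s y].
Proof. by rewrite /AVA avoids_T; split=> [[? []] | []]. Qed.

Lemma straddled_subseq s t y : subseq s t -> straddled s y -> straddled t y.
Proof.
by move=> sub_st [a [b [c [sub_s str]]]]; exists a, b, c; rewrite (subseq_trans sub_s).
Qed.

Lemma straddled_map (f : nat -> nat) s y : straddled (map f s) y <-> exists a b c,
  subseq [:: a; b; c] s /\ (f c < minn (f a) (f b) < y) && (y <= maxn (f a) (f b)).
Proof.
split=> [[a [b [c [/subseq_map_inv[u sub_u] E str]]]] | [a [b [c [sub_s str]]]]].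
  case: u sub_u E => [|a' [|b' [|c' [|? ?]]]] //= sub_u [Ea Eb Ec].
  by exists a', b', c'; rewrite -Ea -Eb -Ec.
by exists (f a), (f b), (f c); rewrite (map_subseq f sub_s).
Qed.

Lemma straddled_shift k s y : y <= k -> straddled (map (shift k) s) y <-> straddled s y.
Proof.
move=> le_yk; rewrite straddled_map.
by split=> -[a [b [c [sub_s str]]]]; exists a, b, c; split=> //;
  move: str; rewrite /shift; do 3!case: ifP; lia.
Qed.

Lemma straddled_shift_succ k s : straddled (map (shift k) s) k.+1 -> straddled s k.
Proof.
case/straddled_map=> a [b [c [sub_s str]]]; exists a, b, c; split=> //.
by move: str; rewrite /shift; do 3!case: ifP; lia.
Qed.

Lemma straddled_T_le k s y :
  y <= k.+1 -> straddled (T k s) y -> straddled (map (shift k) s) y.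
Proof.
move=> le_y [a [b [c [/subseq_rcons_inv[sub_s | [u _ E]] str]]]]; first by exists a, b, c.
by move: (congr1 (last 0) E) str; rewrite last_rcons /= => ->; lia.
Qed.

Lemma straddled_T_gt k s y :
  k \in s -> y \in s -> k < y -> straddled (T k s) y.+1.
Proof.
move=> k_s y_s lt_ky.
have sub_T u v : subseq [:: u; v] s -> subseq [:: shift k u; shift k v; k] (T k s).
  by move=> sub_s; rewrite T_shift -cats1 (cat_subseq (map_subseq _ sub_s)).
have [shift_k shift_y] : shift k k = k.+1 /\ shift k y = y.+1.
  by rewrite /shift leqnn ltnW.
case/orP: (subseq_pair k_s y_s (negbT (ltn_eqF lt_ky)))
  => /sub_T; rewrite shift_k shift_y => sub_s.
  by exists k.+1, y.+1, k; rewrite sub_s; lia.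
by exists y.+1, k.+1, k; rewrite sub_s; lia.
Qed.

Lemma straddled_bound s y : straddled s y -> exists2 v, v \in s & y <= v.
Proof.
move=> [a [b [c [sub_s str]]]]; exists (maxn a b); last lia.
by apply: (mem_subseq sub_s); rewrite /maxn; case: ltnP; rewrite !inE eqxx ?orbT.
Qed.

Lemma AVA_T m pi k x : is_perm m pi -> AVA pi k ->
  AVA (T k pi) x <-> [\/ x = m.+2, x = k.+1 | x <= k /\ AVA pi x].
Proof.
move=> pi_perm k_AVA; have /AVAE[k_range avoid_pi not_str_k] := k_AVA.
have size_pi : size pi = m by rewrite (perm_size pi_perm) size_iota.
have mem_pi v : (v \in pi) = (0 < v <= m) by rewrite (perm_mem pi_perm) mem_iota ltnS.
have avoid_T : avoids_2413_4213 (T k pi) by apply/avoids_T; split.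
have size_T : size (T k pi) = m.+1 by rewrite T_shift size_rcons size_map size_pi.
rewrite AVAE size_T.
have [le_xk | lt_kx] := leqP x k.
  have str_x : straddled (T k pi) x <-> straddled pi x.
    rewrite -(straddled_shift pi le_xk); split; first exact: straddled_T_le (leqW le_xk).
    exact: straddled_subseq (subseq_rcons _ k).
  split=> [[x_range _ not_str] | [|| [_ /AVAE[x_range _ not_str]]]]; try lia.
    by apply: Or33; split=> //; apply/AVAE; split=> //; [lia | move/str_x].
  by split=> //; [lia | move/str_x].
have [-> | ne_x_k1] := eqVneq x k.+1.
  split=> _; first exact: Or32.
  split=> //; first lia.
  by move/(straddled_T_le (leqnn _))/straddled_shift_succ.
have [-> | ne_x_m2] := eqVneq x m.+2.
  split=> _; first exact: Or31.
  split=> //; first lia.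
  case/straddled_bound=> v; rewrite T_shift mem_rcons inE.
  case/predU1P=> [-> | /mapP[u u_pi ->]]; first lia.
  by move: u_pi; rewrite mem_pi /shift; case: ifP; lia.
split=> [[x_range _ not_str] | []]; try lia.
case: not_str; have -> : x = x.-1.+1 by lia.
by apply: straddled_T_gt; rewrite ?mem_pi; lia.
Qed.

Lemma mem_drop_sorted_gtn s j y : sorted gtn s -> j < size s ->
  (y \in drop j s) = (y \in s) && (y <= nth 0 s j).
Proof.
have gtn_trans : transitive gtn by move=> ? ? ? /=; lia.
move=> s_sorted lt_j; move: s_sorted.
rewrite sorted_pairwise // -{1 3}(cat_take_drop j s) pairwise_cat mem_cat.
rewrite (drop_nth 0 lt_j) pairwise_cons => /and3P[/allrelP above _ /andP[/allP below _]].
apply/idP/andP=> [y_drop | [/orP[y_take | //] le_y]].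
  split; first by rewrite y_drop orbT.
  by case/predU1P: y_drop => [-> // | /below /ltnW].
by have := above y _ y_take (mem_head _ _); lia.
Qed.

Theorem lemma5p3 (n : nat) (pi : seq nat) (ks : seq nat) :
  2 <= n ->
  is_perm n.-1 pi ->
  avoids_2413_4213 pi ->
  sorted gtn ks ->
  (forall k, AVA pi k <-> k \in ks) ->
  forall j, j < size ks ->
    forall x, AVA (T (nth 0 ks j) pi) x <->
      (x = n.+1 \/ x = (nth 0 ks j).+1 \/ x \in drop j ks).
Proof.
(* Avoidance of [pi] is implied by [AVA pi k] for any [k]. *)
move=> n_ge2 pi_perm _ ks_sorted ksE j lt_j x.
have k_AVA : AVA pi (nth 0 ks j) by apply/ksE/mem_nth.
rewrite (AVA_T x pi_perm k_AVA) (mem_drop_sorted_gtn _ ks_sorted lt_j).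
have -> : n.-1.+2 = n.+1 by lia.
split=> [[-> | -> | [le_xk /ksE x_ks]] | [-> | [-> | /andP[/ksE x_AVA le_xk]]]].
- by left.
- by right; left.
- by right; right; rewrite x_ks le_xk.
- exact: Or31.
- exact: Or32.
- exact: Or33.
Qed.
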